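(* Let $\mathbb{K}$ be a field of characteristic $0$. Suppose $\mathcal{A}$ is a $2n$-dimensional Poincaré CDGA over $\mathbb{K}$ with trivial differential, and let $\omega\in\mathcal{A}^{2n}$ be the dual of the Poincaré class. Assume also that $\mathcal{A}^i=0$ for $i<0$. Let $\theta$ be a new element of degree $2n-1$ and $\mathcal{A}_\theta=\mathcal{A}\otimes\Lambda\theta$ with $d\theta=\omega$. If $\mathcal{A}_\theta$ is formal, then $\mathcal{A}^{2i+1}=0$ for all $i\in\mathbb{Z}$.
   Context: A finite-dimensional graded commutative algebra $H$ is $n$-dimensional Poincaré if there exists $\alpha_H\in(H^n)^\vee$ (the Poincaré class) such that $H^i\to(H^{n-i})^\vee$, $x\mapsto(y\mapsto\alpha_H(xy))$, is an isomorphism for all $i$; a CDGA is Poincaré if its cohomology is. The dual of the Poincaré class is the element of top degree $\omega$ paired to $\alpha_H$, i.e. with $\alpha_H(\omega)=1$ spanning the top degree. $\mathcal{A}_\theta=\{x+\theta y:x,y\in\mathcal{A}\}$ ($\theta^2=0$ since $\theta$ has odd degree). A CDGA is formal if it is connected to its cohomology by a zigzag of quasi-isomorphisms. *)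

From HB Require Import structures.
From mathcomp Require Import all_boot all_order all_algebra.
Set Implicit Arguments. Unset Strict Implicit. Unset Printing Implicit Defensive.
Import Order.TTheory GRing.Theory Num.Theory.
Local Open Scope ring_scope.

(* The carrier is a K-vector space with a bilinear, associative, unital
   multiplication (the zero algebra is allowed).  The grading is given by a
   family of linear projections [proj i] onto the homogeneous components
   A^i (i : int), pairwise orthogonal, and every element is the (finite)
   sum of its homogeneous components. *)
Record cdga (K : fieldType) := CDGA {
  carrier :> lmodType K;
  mul : carrier -> carrier -> carrier;
  one : carrier;
  proj : int -> carrier -> carrier;
  dif : carrier -> carrier;
  mul_linl : forall (a : K) (x y z : carrier), mul (a *: x + y) z = a *: mul x z + mul y z;
  mul_linr : forall (a : K) (x y z : carrier), mul z (a *: x + y) = a *: mul z x + mul z y;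
  mulA : forall x y z, mul x (mul y z) = mul (mul x y) z;
  mul1l : forall x, mul one x = x;
  mul1r : forall x, mul x one = x;
  proj_lin : forall i (a : K) (x y : carrier), proj i (a *: x + y) = a *: proj i x + proj i y;
  proj_proj : forall i j x, proj i (proj j x) = if i == j then proj j x else 0;
  proj_decomp : forall x, exists s : seq int, x = \sum_(i <- s) proj i x;
  proj_one : proj 0 one = one;
  proj_mul : forall i j x y, proj (i + j) (mul (proj i x) (proj j y)) = mul (proj i x) (proj j y);
  gcomm : forall i j x y,
    mul (proj i x) (proj j y) = ((-1 : K) ^ (i * j)) *: mul (proj j y) (proj i x);
  dif_lin : forall (a : K) (x y : carrier), dif (a *: x + y) = a *: dif x + dif y;
  dif_deg : forall i x, proj (i + 1) (dif (proj i x)) = dif (proj i x);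
  dif_dif : forall x, dif (dif x) = 0;
  leibniz : forall i x y,
    dif (mul (proj i x) y) = mul (dif (proj i x)) y + ((-1 : K) ^ i) *: mul (proj i x) (dif y)
}.

Arguments mul {K} c _ _.
Arguments one {K} c.
Arguments proj {K} c _ _.
Arguments dif {K} c _.

Section Defs.
Variable K : fieldType.

Definition homog (A : cdga K) (i : int) (x : A) : Prop := proj A i x = x.

Definition cdga_morph (A B : cdga K) (f : A -> B) : Prop :=
  [/\ forall (a : K) (x y : A), f (a *: x + y) = a *: f x + f y,
      forall x y, f (mul A x y) = mul B (f x) (f y),
      f (one A) = one B,
      forall i x, f (proj A i x) = proj B i (f x)
    & forall x, f (dif A x) = dif B (f x)].

(* The map induced by f on cohomology H^i is bijective, for every i
   (written out on representatives: cocycles modulo coboundaries). *)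
Definition quasi_iso (A B : cdga K) (f : A -> B) : Prop :=
  cdga_morph f /\
  forall i : int,
    (* injectivity of H^i(f) *)
    (forall x : A, homog i x -> dif A x = 0 ->
       (exists w : B, f x = dif B w) -> exists z : A, x = dif A z) /\
    (* surjectivity of H^i(f) *)
    (forall y : B, homog i y -> dif B y = 0 ->
       exists x : A, [/\ homog i x, dif A x = 0 & exists z : B, y - f x = dif B z]).

Inductive zigzag : cdga K -> cdga K -> Prop :=
  | zz_refl (A : cdga K) : zigzag A A
  | zz_fwd (A B C : cdga K) (f : B -> C) : zigzag A B -> quasi_iso f -> zigzag A C
  | zz_bwd (A B C : cdga K) (f : C -> B) : zigzag A B -> quasi_iso f -> zigzag A C.

(* Formality: A is connected by a zigzag of quasi-isomorphisms to a CDGA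
   with zero differential (necessarily isomorphic to the cohomology H(A)). *)
Definition formal (A : cdga K) : Prop :=
  exists H : cdga K, (forall x : H, dif H x = 0) /\ zigzag A H.

Definition findim (A : cdga K) : Prop :=
  exists s : seq A, forall x : A, exists c : nat -> K,
    x = \sum_(k < size s) c k *: s`_k.

(* A graded commutative algebra H (= a CDGA with trivial differential, which
   is its own cohomology) is m-dimensional Poincare with Poincare class
   alpha in (H^m)^v (a linear form on H, used on H^m): H is finite
   dimensional and for each i the map H^i -> (H^(m-i))^v,
   x |-> (y |-> alpha (x y)) is an isomorphism. *)
Definition poincare_class (A : cdga K) (m : int) (alpha : A -> K) : Prop :=
  [/\ findim A,
      forall (a : K) (x y : A), alpha (a *: x + y) = a * alpha x + alpha y
    & forall i : int,
      (forall x : A, homog i x ->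
         (forall y : A, homog (m - i) y -> alpha (mul A x y) = 0) -> x = 0) /\
      (* surjective onto the dual of H^(m-i) *)
      (forall phi : A -> K,
         (forall (a : K) (y z : A), phi (a *: y + z) = a * phi y + phi z) ->
         exists x : A, homog i x /\
           forall y : A, homog (m - i) y -> phi y = alpha (mul A x y))].

(* B is the CDGA A_theta = A (x) Lambda(theta), |theta| = m - 1,
   d theta = omega : there is a CDGA morphism iota : A -> B and an element
   theta of B of degree m - 1 with d theta = iota omega, such that every
   element of B is uniquely of the form iota x + theta * iota y. *)
Definition is_A_theta (A B : cdga K) (m : int) (omega : A)
    (iota : A -> B) (theta : B) : Prop :=
  [/\ cdga_morph iota,
      homog (m - 1) theta,
      dif B theta = iota omega
    & forall b : B, exists! xy : A * A,
        b = iota xy.1 + mul B theta (iota xy.2)].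

End Defs.

Arguments poincare_class {K} A m alpha.
Arguments is_A_theta {K} A B m omega iota theta.
Arguments findim {K} A.

(** Formal CDGAs have trivial triple Massey products: whenever x, y, z are
    homogeneous cocycles with xy and yz exact, the primitives u, v of xy and
    yz can be chosen so that the Massey representative u z +- x v is exact.
    This passes along quasi-isomorphisms in both directions (cocycles and
    primitives are transported up to coboundaries), hence along zigzags, and
    it holds trivially when the differential vanishes.

    Suppose a in A^p is nonzero with p odd.  Poincare duality gives b in
    A^(2n-p) with ab = omega, and then ba = -omega; in A_theta this reads
    ab = d theta and ba = d(-theta).  Every element of A_theta is uniquely
    x + theta y, and d(x + theta y) = omega y.  If the theta-parts of the
    primitives of ab and ba provided by the triviality of <a, b, a> are q1
    and q2, then omega q1 = omega and omega q2 = -omega, so their degree-0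
    parts are 1 and -1 by duality in degree 0; exactness of the Massey
    representative forces q1 a = a q2, since theta anticommutes with a.  In
    degree p this says a = -a, so a = 0 in characteristic 0. *)

From Pilot Require Import Defs.
From HB Require Import structures.
From mathcomp Require Import all_boot all_order all_algebra zify.
From Stdlib Require Import Classical.
Set Implicit Arguments. Unset Strict Implicit. Unset Printing Implicit Defensive.
Import Order.TTheory GRing.Theory Num.Theory.
Import Pilot.Defs.
Local Open Scope ring_scope.

Section Signs.
Variable K : fieldType.

Lemma expN1zD (i j : int) : (-1 : K) ^ (i + j) = (-1) ^ i * (-1) ^ j.
Proof. by rewrite expfzDr // oppr_eq0 oner_eq0. Qed.

Lemma expN1zS (i : int) : (-1 : K) ^ (i + 1) = - (-1) ^ i.
Proof. by rewrite expN1zD expr1z mulrN1. Qed.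

Lemma expN1z_even (i : int) : (-1 : K) ^ (2 * i) = 1.
Proof. by rewrite -exprz_exp -exprnP expr2 mulrNN mulr1 exp1rz. Qed.

Lemma expN1z_odd (i : int) : (-1 : K) ^ (2 * i + 1) = -1.
Proof. by rewrite expN1zS expN1z_even. Qed.

Lemma expN1zK (i : int) : (-1 : K) ^ i * (-1) ^ i = 1.
Proof. by rewrite -expN1zD -(mulr2n i) -mulr_natl expN1z_even. Qed.

End Signs.

(** * Graded linear algebra in a CDGA *)

HB.instance Definition _ (K : fieldType) (C : cdga K) :=
  GRing.isLinear.Build K C C *:%R (dif C) (@dif_lin K C).
HB.instance Definition _ (K : fieldType) (C : cdga K) (i : int) :=
  GRing.isLinear.Build K C C *:%R (proj C i) (@proj_lin K C i).
HB.instance Definition _ (K : fieldType) (C : cdga K) (x : C) :=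
  GRing.isLinear.Build K C C *:%R (mul C x) (fun a y z => mul_linr a y z x).

Section CdgaAlgebra.
Variables (K : fieldType) (C : cdga K).

Lemma cmulDl (x y z : C) : mul C (x + y) z = mul C x z + mul C y z.
Proof. by rewrite -[x]scale1r mul_linl !scale1r. Qed.

Lemma cmul0l (z : C) : mul C 0 z = 0.
Proof. by apply: (addrI (mul C 0 z)); rewrite -cmulDl !addr0. Qed.

Lemma cmulZl (a : K) (x z : C) : mul C (a *: x) z = a *: mul C x z.
Proof. by rewrite -[a *: x]addr0 mul_linl cmul0l addr0. Qed.

Lemma cmulNl (x z : C) : mul C (- x) z = - mul C x z.
Proof. by rewrite -scaleN1r cmulZl scaleN1r. Qed.

Lemma cmulBl (x y z : C) : mul C (x - y) z = mul C x z - mul C y z.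
Proof. by rewrite cmulDl cmulNl. Qed.

Lemma homog_proj i (x : C) : homog i (proj C i x).
Proof. by rewrite /homog proj_proj eqxx. Qed.

Lemma homog0 i : homog i (0 : C).
Proof. exact: raddf0. Qed.

Lemma homogD i (x y : C) : homog i x -> homog i y -> homog i (x + y).
Proof. by rewrite /homog raddfD /= => -> ->. Qed.

Lemma homogZ i a (x : C) : homog i x -> homog i (a *: x).
Proof. by rewrite /homog linearZ /= => ->. Qed.

Lemma homogN i (x : C) : homog i x -> homog i (- x).
Proof. by rewrite /homog raddfN /= => ->. Qed.

Lemma homogB i (x y : C) : homog i x -> homog i y -> homog i (x - y).
Proof. by move=> hx hy; apply/homogD/homogN. Qed.

Lemma homogM i j (x y : C) : homog i x -> homog j y -> homog (i + j) (mul C x y).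
Proof. by rewrite /homog => <- <-; rewrite proj_mul. Qed.

Lemma homog_dif i (x : C) : homog i x -> homog (i + 1) (dif C x).
Proof. by rewrite /homog => <-; rewrite dif_deg. Qed.

Lemma homog_cast i j (x : C) : i = j -> homog i x -> homog j x.
Proof. by move=> ->. Qed.

Lemma difM i (x y : C) : homog i x ->
  dif C (mul C x y) = mul C (dif C x) y + (-1) ^ i *: mul C x (dif C y).
Proof. by rewrite /homog => <-; rewrite leibniz. Qed.

Lemma cmulC i j (x y : C) : homog i x -> homog j y ->
  mul C x y = (-1) ^ (i * j) *: mul C y x.
Proof. by rewrite /homog => <- <-; rewrite gcomm. Qed.

Lemma dif_cocycleM i (x y : C) :
  homog i x -> dif C x = 0 -> dif C y = 0 -> dif C (mul C x y) = 0.
Proof. by move=> hx dx dy; rewrite (difM _ hx) dx dy cmul0l raddf0 scaler0 addr0. Qed.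

Lemma sum_if_eq_count (V : nmodType) (S : seq int) (F : int -> V) t :
  \sum_(s <- S) (if t == s then F s else 0) = F t *+ count_mem t S.
Proof.
elim: S => [|s S IH]; first by rewrite big_nil.
by rewrite big_cons IH /= eq_sym; case: eqP => [->|_]; rewrite ?mulrS ?add0r.
Qed.

Lemma proj_graded_morph (D : cdga K) (g : C -> D) (d : int) :
  {morph g : a b / a + b} -> (forall s x, homog (s + d) (g (proj C s x))) ->
  forall t x, proj D (t + d) (g x) = g (proj C t x).
Proof.
move=> gD gdeg t x.
have g0 : g 0 = 0 by apply: (addrI (g 0)); rewrite -gD !addr0.
have gMn a c : g (a *+ c) = g a *+ c.
  by elim: c => [|c IH]; rewrite ?mulr0n // !mulrS gD IH.
have [S ex] := proj_decomp x.
(* [S] may list a degree several times: [t] occurs [count_mem t S] times. *)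
have projx : proj C t x = proj C t x *+ count_mem t S.
  rewrite {1}ex raddf_sum -(sum_if_eq_count _ (fun s => proj C s x)).
  by apply: eq_bigr => s _; apply: proj_proj.
have gsum : g (\sum_(s <- S) proj C s x) = \sum_(s <- S) g (proj C s x).
  exact: big_morph.
rewrite {1}ex gsum raddf_sum [in RHS]projx gMn.
rewrite -(sum_if_eq_count _ (fun s => g (proj C s x))).
apply: eq_bigr => s _ /=; rewrite -{1}(gdeg s x) proj_proj (inj_eq (addIr d)).
by case: eqP => // _; apply: gdeg.
Qed.

Lemma proj_dif t (x : C) : proj C (t + 1) (dif C x) = dif C (proj C t x).
Proof.
by apply: proj_graded_morph; [exact: raddfD | move=> s y; apply/homog_dif/homog_proj].
Qed.

Lemma proj_mulr i t (x y : C) :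
  homog i x -> proj C (t + i) (mul C x y) = mul C x (proj C t y).
Proof.
move=> hx; apply: proj_graded_morph; first exact: raddfD.
by move=> s z; rewrite addrC; apply/homogM/homog_proj.
Qed.

Lemma proj_mull j t (x y : C) :
  homog j y -> proj C (t + j) (mul C x y) = mul C (proj C t x) y.
Proof.
move=> hy; apply: (proj_graded_morph (g := mul C ^~ y)).
  by move=> a b; apply: cmulDl.
by move=> s z; apply/homogM/hy; apply: homog_proj.
Qed.

Lemma exact_homog t (x z : C) :
  homog t x -> x = dif C z -> x = dif C (proj C (t - 1) z).
Proof. by move=> hx ez; rewrite -proj_dif subrK -ez hx. Qed.

End CdgaAlgebra.

(** * Triple Massey products *)

Section Massey.
Variables (K : fieldType) (C : cdga K).

Definition massey_rep (i : int) (x z u v : C) : C :=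
  mul C u z + (-1) ^ (i + 1) *: mul C x v.

(* [u] and [v] only witness that [xy] and [yz] are exact: the Massey product
   contains 0 when some choice of primitives makes [massey_rep] exact. *)
Definition massey_contains0 (i j k : int) (x y z : C) : Prop :=
  forall u v, homog (i + j - 1) u -> homog (j + k - 1) v ->
    mul C x y = dif C u -> mul C y z = dif C v ->
  exists u' v' w, [/\ homog (i + j - 1) u', homog (j + k - 1) v',
    mul C x y = dif C u', mul C y z = dif C v' &
    massey_rep i x z u' v' = dif C w].

Definition massey_trivial : Prop :=
  forall i j k (x y z : C), homog i x -> homog j y -> homog k z ->
    dif C x = 0 -> dif C y = 0 -> dif C z = 0 -> massey_contains0 i j k x y z.

Lemma massey_trivial_dif0 : (forall x : C, dif C x = 0) -> massey_trivial.
Proof.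
move=> d0 i j k x y z _ _ _ _ _ _ u v _ _ exy eyz.
exists 0, 0, 0; split; rewrite ?exy ?eyz ?d0 ?raddf0 //; try exact: homog0.
by rewrite /massey_rep cmul0l raddf0 scaler0 addr0.
Qed.

Lemma dif_massey_rep i j (x y z u v : C) :
  homog i x -> homog (i + j - 1) u -> dif C x = 0 -> dif C z = 0 ->
  mul C x y = dif C u -> mul C y z = dif C v -> dif C (massey_rep i x z u v) = 0.
Proof.
move=> hx hu dx dz exy eyz.
rewrite raddfD /= linearZ /= (difM _ hu) (difM _ hx) dz dx -exy -eyz.
rewrite raddf0 cmul0l scaler0 addr0 add0r scalerA expN1zS mulNr expN1zK scaleN1r.
by rewrite mulA subrr.
Qed.

Lemma massey_rep_sub_dif i l (x z u v a b : C) :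
  homog i x -> homog l a -> dif C x = 0 -> dif C z = 0 ->
  massey_rep i x z (u - dif C a) (v - dif C b) =
  massey_rep i x z u v - dif C (mul C a z - mul C x b).
Proof.
move=> hx ha dx dz.
rewrite /massey_rep cmulBl [mul C x _]raddfB [dif C (_ - _)]raddfB /=.
rewrite (difM _ ha) (difM _ hx) dz dx raddf0 scaler0 addr0 cmul0l add0r.
by rewrite expN1zS scalerBr !scaleNr opprK opprB addrACA [- _ + _]addrC.
Qed.

Lemma massey_contains0_dif_addl i j k (x y z a : C) :
  homog j y -> dif C y = 0 -> homog (i - 1) a ->
  massey_contains0 i j k x y z -> massey_contains0 i j k (x + dif C a) y z.
Proof.
move=> hy dy ha Mxyz u v hu hv exy eyz.
have hay : homog (i + j - 1) (mul C a y) by apply: homog_cast (homogM ha hy); lia.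
have day : dif C (mul C a y) = mul C (dif C a) y.
  by rewrite (difM _ ha) dy raddf0 scaler0 addr0.
have exy' : mul C x y = dif C (u - mul C a y) by rewrite raddfB /= day -exy cmulDl addrK.
have [u' [v' [w [hu' hv' exu' eyv' ew]]]] := Mxyz _ v (homogB hu hay) hv exy' eyz.
exists (u' + mul C a y), v', (w + (-1) ^ (i + 1) *: mul C a v'); split => //.
- exact: homogD.
- by rewrite cmulDl raddfD /= -exu' day.
rewrite raddfD /= -ew linearZ /= (difM _ ha) -eyv' scalerDr scalerA -expN1zD.
rewrite (_ : i + 1 + (i - 1) = 2 * i); last by lia.
rewrite expN1z_even scale1r /massey_rep !cmulDl scalerDr -mulA.
by rewrite addrACA (addrC (mul C a _)).
Qed.

Lemma massey_contains0_dif_addm i j k (x y z b : C) :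
  homog i x -> homog k z -> dif C x = 0 -> dif C z = 0 -> homog (j - 1) b ->
  massey_contains0 i j k x y z -> massey_contains0 i j k x (y + dif C b) z.
Proof.
move=> hx hz dx dz hb Mxyz u v hu hv exy eyz.
have hxb : homog (i + j - 1) (mul C x b) by apply: homog_cast (homogM hx hb); lia.
have hbz : homog (j + k - 1) (mul C b z) by apply: homog_cast (homogM hb hz); lia.
have xdb : mul C x (dif C b) = (-1) ^ i *: dif C (mul C x b).
  by rewrite (difM _ hx) dx cmul0l add0r scalerA expN1zK scale1r.
have dbz : dif C (mul C b z) = mul C (dif C b) z.
  by rewrite (difM _ hb) dz raddf0 scaler0 addr0.
have exy' : mul C x y = dif C (u - (-1) ^ i *: mul C x b).
  by rewrite raddfB /= linearZ /= -xdb -exy raddfD /= addrK.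
have eyz' : mul C y z = dif C (v - mul C b z).
  by rewrite raddfB /= dbz -eyz cmulDl addrK.
have [u' [v' [w [hu' hv' exu' eyv' ew]]]] :=
  Mxyz _ _ (homogB hu (homogZ _ hxb)) (homogB hv hbz) exy' eyz'.
exists (u' + (-1) ^ i *: mul C x b), (v' + mul C b z), w; split.
- exact/homogD/homogZ.
- exact: homogD.
- by rewrite raddfD /= raddfD /= linearZ /= -xdb -exu'.
- by rewrite cmulDl raddfD /= dbz -eyv'.
rewrite -ew /massey_rep cmulDl raddfD /= scalerDr cmulZl -mulA expN1zS scaleNr.
by rewrite !scaleNr addrACA subrr addr0.
Qed.

Lemma massey_contains0_dif_addr i j k (x y z c : C) :
  homog j y -> dif C y = 0 -> homog (k - 1) c ->
  massey_contains0 i j k x y z -> massey_contains0 i j k x y (z + dif C c).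
Proof.
move=> hy dy hc Mxyz u v hu hv exy eyz.
have hyc : homog (j + k - 1) (mul C y c) by apply: homog_cast (homogM hy hc); lia.
have ydc : mul C y (dif C c) = (-1) ^ j *: dif C (mul C y c).
  by rewrite (difM _ hy) dy cmul0l add0r scalerA expN1zK scale1r.
have eyz' : mul C y z = dif C (v - (-1) ^ j *: mul C y c).
  by rewrite raddfB /= linearZ /= -ydc -eyz raddfD /= addrK.
have [u' [v' [w [hu' hv' exu' eyv' ew]]]] :=
  Mxyz _ _ hu (homogB hv (homogZ _ hyc)) exy eyz'.
set t := (-1 : K) ^ (i + j - 1).
have u'dc : mul C u' (dif C c) = t *: (dif C (mul C u' c) - mul C (mul C x y) c).
  by rewrite (difM _ hu') -exu' addrC addKr scalerA expN1zK scale1r.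
have st : (-1) ^ (i + 1) * (-1) ^ j = t.
  by rewrite -expN1zD /t (_ : i + 1 + j = i + j - 1 + 1 + 1) ?expN1zS ?opprK //; lia.
exists u', (v' + (-1) ^ j *: mul C y c), (w + t *: mul C u' c); split => //.
- exact/homogD/homogZ.
- by rewrite raddfD /= raddfD /= linearZ /= -ydc -eyv'.
rewrite raddfD /= -ew linearZ /= /massey_rep [mul C u' _]raddfD [mul C x _]raddfD /=.
rewrite linearZ /= u'dc !scalerDr scalerA st mulA scalerN.
by rewrite addrACA subrK.
Qed.

End Massey.

Section Morphisms.
Variables (K : fieldType) (A B : cdga K) (f : A -> B).
Hypothesis fm : cdga_morph f.

Lemma morphD : {morph f : x y / x + y}.
Proof. by case: fm => fl _ _ _ _ x y; rewrite -[x]scale1r fl !scale1r. Qed.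

Lemma morph0 : f 0 = 0.
Proof. by apply: (addrI (f 0)); rewrite -morphD !addr0. Qed.

Lemma morphZ a x : f (a *: x) = a *: f x.
Proof. by case: fm => fl _ _ _ _; rewrite -[a *: x]addr0 fl morph0 addr0. Qed.

Lemma morphN x : f (- x) = - f x.
Proof. by rewrite -scaleN1r morphZ scaleN1r. Qed.

Lemma morphM x y : f (mul A x y) = mul B (f x) (f y).
Proof. by case: fm. Qed.

Lemma morph_dif x : f (dif A x) = dif B (f x).
Proof. by case: fm. Qed.

Lemma morph_homog i x : homog i x -> homog i (f x).
Proof. by case: fm => _ _ _ fp _; rewrite /homog -fp => ->. Qed.

Lemma morph_cocycle x : dif A x = 0 -> dif B (f x) = 0.
Proof. by rewrite -morph_dif => ->; apply: morph0. Qed.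

Lemma morph_massey_rep i x z u v :
  f (massey_rep i x z u v) = massey_rep i (f x) (f z) (f u) (f v).
Proof. by rewrite morphD morphZ !morphM. Qed.

End Morphisms.

(** * Invariance under quasi-isomorphisms *)

Section QuasiIso.
Variables (K : fieldType) (A B : cdga K) (f : A -> B).
Hypothesis fq : quasi_iso f.

Let fm : cdga_morph f := fq.1.

Lemma quasi_iso_exact i (x : A) : homog i x -> dif A x = 0 ->
  (exists w, f x = dif B w) -> exists2 z, homog (i - 1) z & x = dif A z.
Proof.
move=> hx dx fx_exact; have [z ez] := (fq.2 i).1 x hx dx fx_exact.
by exists (proj A (i - 1) z); [apply: homog_proj | apply: exact_homog hx ez].
Qed.

Lemma quasi_iso_cocycle l (W : B) : homog l W -> dif B W = 0 ->
  exists x a, [/\ homog l x, dif A x = 0, homog (l - 1) a & W = f x + dif B a].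
Proof.
move=> hW dW; have [x [hx dx [z ez]]] := (fq.2 l).2 W hW dW.
exists x, (proj B (l - 1) z); split=> //; first exact: homog_proj.
by rewrite -(exact_homog (homogB hW (morph_homog fm hx)) ez) addrC subrK.
Qed.

Lemma massey_contains0_morph i j k (x y z : A) :
  homog i x -> homog j y -> homog k z ->
  dif A x = 0 -> dif A y = 0 -> dif A z = 0 ->
  massey_contains0 i j k x y z -> massey_contains0 i j k (f x) (f y) (f z).
Proof.
move=> hx hy hz dx dy dz Mxyz U V _ _ eU eV.
have [u hu exy] : exists2 u, homog (i + j - 1) u & mul A x y = dif A u.
  apply: quasi_iso_exact (homogM hx hy) (dif_cocycleM hx dx dy) _.
  by exists U; rewrite (morphM fm).
have [v hv eyz] : exists2 v, homog (j + k - 1) v & mul A y z = dif A v.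
  apply: quasi_iso_exact (homogM hy hz) (dif_cocycleM hy dy dz) _.
  by exists V; rewrite (morphM fm).
have [u' [v' [w [hu' hv' exu' eyv' ew]]]] := Mxyz u v hu hv exy eyz.
exists (f u'), (f v'), (f w); split; try exact: morph_homog.
- by rewrite -(morphM fm) exu' (morph_dif fm).
- by rewrite -(morphM fm) eyv' (morph_dif fm).
by rewrite -(morph_massey_rep fm) ew (morph_dif fm).
Qed.

Lemma massey_trivial_quasi_iso : massey_trivial A -> massey_trivial B.
Proof.
move=> MA i j k X Y Z hX hY hZ dX dY dZ.
have [x [a [hx dx ha ->]]] := quasi_iso_cocycle hX dX.
have [y [b [hy dy hb ->]]] := quasi_iso_cocycle hY dY.
have [z [c [hz dz hc ->]]] := quasi_iso_cocycle hZ dZ.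
have Mf := massey_contains0_morph hx hy hz dx dy dz (MA _ _ _ _ _ _ hx hy hz dx dy dz).
have hfdf l x' a' : homog l x' -> homog (l - 1) a' -> homog l (f x' + dif B a').
  move=> hx' ha'; apply: homogD (morph_homog fm hx') _.
  by apply: homog_cast (homog_dif ha'); rewrite subrK.
have dfdf x' a' : dif A x' = 0 -> dif B (f x' + dif B a') = 0.
  by move=> dx'; rewrite raddfD /= dif_dif addr0; apply: (morph_cocycle fm).
apply: massey_contains0_dif_addr (hfdf _ _ _ hy hb) (dfdf _ _ dy) hc _.
apply: massey_contains0_dif_addm (hfdf _ _ _ hx ha) (morph_homog fm hz)
  (dfdf _ _ dx) (morph_cocycle fm dz) hb _.
exact: massey_contains0_dif_addl (morph_homog fm hy) (morph_cocycle fm dy) ha Mf.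
Qed.

Lemma massey_trivial_quasi_iso_inv : massey_trivial B -> massey_trivial A.
Proof.
move=> MB i j k x y z hx hy hz dx dy dz u v hu hv exy eyz.
have fexy : mul B (f x) (f y) = dif B (f u) by rewrite -(morphM fm) exy (morph_dif fm).
have feyz : mul B (f y) (f z) = dif B (f v) by rewrite -(morphM fm) eyz (morph_dif fm).
have [U' [V' [W [hU' hV' exU' eyV' eW]]]] :=
  MB i j k _ _ _ (morph_homog fm hx) (morph_homog fm hy) (morph_homog fm hz)
    (morph_cocycle fm dx) (morph_cocycle fm dy) (morph_cocycle fm dz) _ _
    (morph_homog fm hu) (morph_homog fm hv) fexy feyz.
have dU : dif B (U' - f u) = 0 by rewrite raddfB /= -exU' fexy subrr.
have dV : dif B (V' - f v) = 0 by rewrite raddfB /= -eyV' feyz subrr.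
have [c1 [a1 [hc1 dc1 ha1 eU]]] := quasi_iso_cocycle (homogB hU' (morph_homog fm hu)) dU.
have [c2 [a2 [hc2 dc2 ha2 eV]]] := quasi_iso_cocycle (homogB hV' (morph_homog fm hv)) dV.
have exy' : mul A x y = dif A (u + c1) by rewrite raddfD /= dc1 addr0.
have eyz' : mul A y z = dif A (v + c2) by rewrite raddfD /= dc2 addr0.
have hQ : homog (i + j + k - 1) (massey_rep i x z (u + c1) (v + c2)).
  apply: homogD; first by apply: homog_cast (homogM (homogD hu hc1) hz); lia.
  by apply/homogZ/(homog_cast _ (homogM hx (homogD hv hc2))); lia.
have fQ_exact : exists W', f (massey_rep i x z (u + c1) (v + c2)) = dif B W'.
  exists (W - (mul B a1 (f z) - mul B (f x) a2)).
  rewrite (morph_massey_rep fm) !(morphD fm).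
  have -> : f u + f c1 = U' - dif B a1.
    by rewrite -[U'](subrK (f u)) eU addrAC addrK addrC.
  have -> : f v + f c2 = V' - dif B a2.
    by rewrite -[V'](subrK (f v)) eV addrAC addrK addrC.
  rewrite (massey_rep_sub_dif _ _ _ (morph_homog fm hx) ha1) ?(morph_cocycle fm) //.
  by rewrite eW [in RHS]raddfB.
have dQ := dif_massey_rep hx (homogD hu hc1) dx dz exy' eyz'.
have [w _ ew] := quasi_iso_exact hQ dQ fQ_exact.
by exists (u + c1), (v + c2), w; split=> //; apply: homogD.
Qed.

End QuasiIso.

Lemma massey_trivial_zigzag (K : fieldType) (A C : cdga K) :
  zigzag A C -> massey_trivial C -> massey_trivial A.
Proof.
elim=> [//|A' B' C' f _ IH fq|A' B' C' f _ IH fq] MC; apply: IH.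
  exact: massey_trivial_quasi_iso_inv fq MC.
exact: massey_trivial_quasi_iso fq MC.
Qed.

Lemma formal_massey_trivial (K : fieldType) (A : cdga K) :
  formal A -> massey_trivial A.
Proof.
by case=> H [dH0 zAH]; apply: massey_trivial_zigzag zAH (massey_trivial_dif0 dH0).
Qed.

(** * Poincare duality and the algebra A_theta *)

Section Poincare.
Variables (K : fieldType) (A : cdga K) (m : int) (alpha : A -> K) (omega : A).
Hypotheses (Hpc : poincare_class A m alpha) (homega : homog m omega).
Hypotheses (alpha_omega : alpha omega = 1)
  (omega_span : forall x, homog m x -> exists c, x = c *: omega).

Let alpha_lin : forall a x y, alpha (a *: x + y) = a * alpha x + alpha y.
Proof. by case: Hpc. Qed.

Let alpha0 : alpha 0 = 0.
Proof.
have := alpha_lin 1 0 0; rewrite scaler0 addr0 GRing.mul1r => e.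
by apply: (addrI (alpha 0)); rewrite -e addr0.
Qed.

Let alphaZ a x : alpha (a *: x) = a * alpha x.
Proof. by rewrite -[a *: x]addr0 alpha_lin alpha0 addr0. Qed.

Let poincare_inj i x : homog i x ->
  (forall y, homog (m - i) y -> alpha (mul A x y) = 0) -> x = 0.
Proof. by case: Hpc => _ _ /(_ i) [inj _]; apply: inj. Qed.

Lemma poincare_dual_omega p (a : A) : homog p a -> a != 0 ->
  exists2 b, homog (m - p) b & mul A a b = omega.
Proof.
move=> ha anz.
have [y hy ay] : exists2 y, homog (m - p) y & alpha (mul A a y) != 0.
  apply: NNPP => no_y; move/eqP: anz; apply; apply: (poincare_inj ha) => y hy.
  by case: (eqVneq (alpha (mul A a y)) 0) => // ay; case: no_y; exists y.
have [c ec] := omega_span (homog_cast (subrKC p m) (homogM ha hy)).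
have cnz : c != 0 by move: ay; rewrite ec alphaZ alpha_omega mulr1.
exists (c^-1 *: y); first exact: homogZ.
by rewrite linearZ /= ec scalerA mulVf // scale1r.
Qed.

Lemma omega_mul_proj0 (q : A) (c : K) :
  mul A omega q = c *: omega -> proj A 0 q = c *: one A.
Proof.
move=> eq_omega; have hr : homog 0 (proj A 0 q - c *: one A).
  by apply: homogB (homog_proj _ _) (homogZ _ (proj_one A)).
apply: subr0_eq; apply: (poincare_inj hr) => y hy.
have [c' ->] := omega_span (homog_cast (subr0 m) hy).
rewrite linearZ /= (cmulC hr homega) mul0r expr0z scale1r raddfB /= linearZ /= mul1r.
rewrite -(proj_mulr 0 q homega) add0r eq_omega linearZ /= homega subrr.
by rewrite scaler0 alpha0.
Qed.

End Poincare.

Section ATheta.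
Variables (K : fieldType) (A B : cdga K) (n : int) (omega : A).
Variables (iota : A -> B) (theta : B).
Hypotheses (HB : is_A_theta A B (2 * n) omega iota theta)
  (dA0 : forall x : A, dif A x = 0).

Let iota_morph : cdga_morph iota. Proof. by case: HB. Qed.
Let htheta : homog (2 * n - 1) theta. Proof. by case: HB. Qed.
Let dtheta : dif B theta = iota omega. Proof. by case: HB. Qed.

Lemma A_theta_decomp (b : B) : exists p q, b = iota p + mul B theta (iota q).
Proof. by case: HB => _ _ _ /(_ b) [[p q] [eb _]]; exists p, q. Qed.

Lemma A_theta_decomp_inj p1 q1 p2 q2 :
  iota p1 + mul B theta (iota q1) = iota p2 + mul B theta (iota q2) ->
  p1 = p2 /\ q1 = q2.
Proof.
case: HB => _ _ _ /(_ (iota p2 + mul B theta (iota q2))) [pq [_ uniq_pq]] e.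
by have := uniq_pq (p1, q1) (esym e); rewrite (uniq_pq (p2, q2) erefl) => -[-> ->].
Qed.

Lemma A_theta_iota_inj : injective iota.
Proof.
move=> p1 p2 e.
have : iota p1 + mul B theta (iota 0) = iota p2 + mul B theta (iota 0) by rewrite e.
by case/A_theta_decomp_inj.
Qed.

Lemma dif_A_theta p q :
  dif B (iota p + mul B theta (iota q)) = iota (mul A omega q).
Proof.
have iota_cocycle x : dif B (iota x) = 0 by rewrite -(morph_dif iota_morph) dA0 morph0.
rewrite raddfD /= (difM _ htheta) dtheta !iota_cocycle raddf0 scaler0 add0r addr0.
by rewrite (morphM iota_morph).
Qed.

Lemma mul_A_theta_iota p q r :
  mul B (iota p + mul B theta (iota q)) (iota r) =
  iota (mul A p r) + mul B theta (iota (mul A q r)).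
Proof. by rewrite cmulDl -mulA !(morphM iota_morph). Qed.

Lemma mul_iota_A_theta i a p q : homog i a ->
  mul B (iota a) (iota p + mul B theta (iota q)) =
  iota (mul A a p) + mul B theta (iota ((-1) ^ (i * (2 * n - 1)) *: mul A a q)).
Proof.
move=> ha; rewrite raddfD /= mulA (cmulC (morph_homog iota_morph ha) htheta).
by rewrite cmulZl -mulA (morphZ iota_morph) linearZ /= !(morphM iota_morph).
Qed.

Lemma A_theta_massey_theta_part i a p1 q1 p2 q2 w : homog (2 * i + 1) a ->
  massey_rep (2 * i + 1) (iota a) (iota a)
    (iota p1 + mul B theta (iota q1)) (iota p2 + mul B theta (iota q2)) = dif B w ->
  mul A q1 a = mul A a q2.
Proof.
move=> ha; have [p3 [q3 ->]] := A_theta_decomp w.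
have sg_theta : (-1 : K) ^ ((2 * i + 1) * (2 * n - 1)) = -1.
  by rewrite (_ : _ * _ = 2 * (2 * i * n - i + n - 1) + 1) ?expN1z_odd //; nia.
have sg_rep : (-1 : K) ^ (2 * i + 1 + 1) = 1.
  by rewrite (_ : _ + 1 = 2 * (i + 1)) ?expN1z_even //; lia.
rewrite /massey_rep mul_A_theta_iota (mul_iota_A_theta _ _ ha) sg_theta sg_rep.
rewrite scale1r scaleN1r dif_A_theta -[X in _ = X]addr0.
rewrite -(raddf0 (mul B theta)) -(morph0 iota_morph) addrACA.
rewrite -!(morphD iota_morph) -raddfD -(morphD iota_morph).
by case/A_theta_decomp_inj => _ /subr0_eq.
Qed.

Lemma A_theta_massey_obstruction (i : int) (a b : A) :
  (forall q c, mul A omega q = c *: omega -> proj A 0 q = c *: one A) ->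
  homog (2 * i + 1) a -> homog (2 * n - (2 * i + 1)) b -> mul A a b = omega ->
  massey_trivial B -> a *+ 2 = 0.
Proof.
move=> omega_proj0 ha hb ab MB; set p := 2 * i + 1 in ha hb.
have ba : mul A b a = - omega.
  rewrite (cmulC hb ha) ab (_ : _ * _ = 2 * ((n - i - 1) * p + i) + 1).
    by rewrite expN1z_odd scaleN1r.
  by rewrite /p; nia.
have iota_cocycle x : dif B (iota x) = 0 := morph_cocycle iota_morph (dA0 x).
have e1 : mul B (iota a) (iota b) = dif B theta.
  by rewrite -(morphM iota_morph) ab dtheta.
have e2 : mul B (iota b) (iota a) = dif B (- theta).
  by rewrite -(morphM iota_morph) ba (morphN iota_morph) raddfN /= dtheta.
have htheta1 : homog (p + (2 * n - p) - 1) theta by rewrite (addrC p) subrK.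
have htheta2 : homog ((2 * n - p) + p - 1) (- theta) by rewrite subrK; apply: homogN.
have [u' [v' [w [_ _ eu' ev' ew]]]] :=
  MB p (2 * n - p) p _ _ _ (morph_homog iota_morph ha) (morph_homog iota_morph hb)
    (morph_homog iota_morph ha) (iota_cocycle a) (iota_cocycle b) (iota_cocycle a)
    _ _ htheta1 htheta2 e1 e2.
have [p1 [q1 Eu']] := A_theta_decomp u'.
have [p2 [q2 Ev']] := A_theta_decomp v'.
have q1_0 : proj A 0 q1 = one A.
  rewrite -[one A]scale1r; apply: omega_proj0; apply: A_theta_iota_inj.
  by rewrite scale1r -(dif_A_theta p1) -Eu' -eu' -(morphM iota_morph) ab.
have q2_0 : proj A 0 q2 = - one A.
  rewrite -scaleN1r; apply: omega_proj0; apply: A_theta_iota_inj.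
  by rewrite scaleN1r -(dif_A_theta p2) -Ev' -ev' -(morphM iota_morph) ba.
rewrite Eu' Ev' in ew; have := f_equal (proj A (0 + p)) (A_theta_massey_theta_part ha ew).
rewrite (proj_mull 0 q1 ha) (proj_mulr 0 q2 ha) q1_0 q2_0 mul1l raddfN /= mul1r.
by move/eqP; rewrite -addr_eq0 -mulr2n => /eqP.
Qed.

End ATheta.

Unset Implicit Arguments.

Theorem lemma3p6 (K : fieldType) (charK0 : [pchar K] =i pred0) (n : nat)
  (A : cdga K)
  (trivial_dif : forall x : A, dif A x = 0)
  (nonneg : forall (i : int) (x : A), i < 0 -> proj A i x = 0)
  (alpha : A -> K) (Hpoinc : poincare_class A (2 * n)%:Z alpha)
  (omega : A) (Homega_deg : homog (2 * n)%:Z omega) (Homega : alpha omega = 1)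
  (Homega_span : forall x : A, homog (2 * n)%:Z x -> exists c : K, x = c *: omega)
  (B : cdga K) (iota : A -> B) (theta : B)
  (HB : is_A_theta A B (2 * n)%:Z omega iota theta)
  (Hformal : formal B) :
  forall (i : int) (x : A), proj A (2 * i + 1) x = 0.
Proof.
move=> i x; set a := proj A (2 * i + 1) x.
have [//|anz] := eqVneq a 0.
have [b hb ab] := poincare_dual_omega Hpoinc Homega Homega_span (homog_proj _ x) anz.
rewrite PoszM in HB hb.
have : a *+ 2 = 0.
  apply: (A_theta_massey_obstruction HB trivial_dif _ (homog_proj _ x) hb ab).
    exact: omega_mul_proj0 Hpoinc Homega_deg Homega_span.
  exact: formal_massey_trivial Hformal.
move/eqP; rewrite -scaler_nat scaler_eq0 (negbTE anz) orbF.
by move/pcharf0P: charK0 => ->.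
Qed.
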